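(* In the $\beta$-model, for a fixed positive integer $r$, $$\|W_{22}-\widetilde W_{22}\|_{\max}\lesssim\frac{b_n^6}{n^3c_n^5},$$ where $W_{22}$ is the bottom-right $(n-r)\times(n-r)$ block of $W=V^{-1}-S$ and $\widetilde W_{22}=V_{22}^{-1}-S_{22}$.
   Context: $\beta$-model with parameter $\boldsymbol\beta\in\mathbb R^n$. $V=(v_{ij})$ with $v_{ij}=e^{\beta_i+\beta_j}/(1+e^{\beta_i+\beta_j})^2$ for $i\ne j$ and $v_{ii}=\sum_{j\ne i}v_{ij}$; $S=\mathrm{diag}(1/v_{11},\dots,1/v_{nn})$; $V_{22}$ is the bottom-right $(n-r)\times(n-r)$ block of $V$ and $S_{22}=\mathrm{diag}(1/v_{r+1,r+1},\dots,1/v_{nn})$. $\|J\|_{\max}=\max_{i,j}|J_{ij}|$. $b_n=\max_{i\neq j}(1+e^{\beta_i+\beta_j})^2/e^{\beta_i+\beta_j}$, $c_n=\min_{i\ne j}(\cdot)$. $x\lesssim y$ means $x\le Cy$ for a constant $C$ independent of $n$. *)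

From HB Require Import structures.
From mathcomp Require Import all_boot all_order all_algebra.
From mathcomp Require Import reals.
From mathcomp.analysis Require Import sequences exp.
Set Implicit Arguments. Unset Strict Implicit. Unset Printing Implicit Defensive.
Import Order.TTheory GRing.Theory Num.Theory.
Local Open Scope ring_scope.

Section BetaModel.
Variable R : realType.
Variable n : nat.
Variable beta : 'I_n -> R.

Definition bm_v (i j : 'I_n) : R :=
  expR (beta i + beta j) / (1 + expR (beta i + beta j)) ^+ 2.

Definition bm_V : 'M[R]_n :=
  \matrix_(i, j) (if i == j then \sum_(k | k != i) bm_v i k else bm_v i j).

Definition bm_S : 'M[R]_n :=
  \matrix_(i, j) (if i == j then (bm_V i i)^-1 else 0).

Definition bm_W : 'M[R]_n := invmx bm_V - bm_S.

Definition bm_ratio (i j : 'I_n) : R :=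
  (1 + expR (beta i + beta j)) ^+ 2 / expR (beta i + beta j).

(* b_n = max_{i<>j} ratio (all ratios are >= 4 > 0, so the seed 0 is harmless) *)
Definition bm_b : R :=
  \big[Num.max/0]_(i : 'I_n) \big[Num.max/0]_(j : 'I_n | j != i) bm_ratio i j.

(* c_n = min_{i<>j} ratio (seed b_n is >= every ratio, so harmless for n >= 2) *)
Definition bm_c : R :=
  \big[Num.min/bm_b]_(i : 'I_n) \big[Num.min/bm_b]_(j : 'I_n | j != i) bm_ratio i j.
End BetaModel.

Definition maxnorm (R : realType) (p q : nat) (J : 'M[R]_(p, q)) : R :=
  \big[Num.max/0]_(i : 'I_p) \big[Num.max/0]_(j : 'I_q) `|J i j|.

(* V is symmetric, diagonally dominant, with off-diagonal entries in
   [1/b_n, 1/c_n]; symmetrizing u^T V u gives u^T V u >= (n - 2)/b_n |u|^2,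
   so V and V_22 are invertible.  With X = V^-1, the block equations of
   V X = 1 give X_22 - V_22^-1 = -Y X_12, where Y = V_22^-1 V_21.  The
   columns of Y solve systems whose matrix V_22 has diagonal at least
   (n - 1)/b_n, so |Y| <= 3 b_n^2/((n - 1) c_n^2).  The j-th column u of
   [X_12; X_22 - V_22^-1] satisfies V u = [-(Y^T)_j; 0]; the quadratic form
   bound and Cauchy-Schwarz give sum_l |(X_12)_lj| <= r b_n max|Y|/(n - 2).
   Hence |X_22 - V_22^-1| <= 9 r b_n^5/(c_n^4 (n - 1)^2 (n - 2)). *)

From HB Require Import structures.
From mathcomp Require Import all_boot all_order all_algebra.
From mathcomp Require Import reals.
From mathcomp.analysis Require Import sequences exp.
From mathcomp Require Import lra ring.
Set Implicit Arguments. Unset Strict Implicit. Unset Printing Implicit Defensive.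
Import Order.TTheory GRing.Theory Num.Theory.
Local Open Scope ring_scope.

Section SumInequalities.
Variable R : realFieldType.

Lemma sqr_sum_le p (f : 'I_p -> R) : (\sum_i f i) ^+ 2 <= p%:R * \sum_i f i ^+ 2.
Proof.
set S := \sum_i f i; set Q := \sum_i f i ^+ 2.
have row i : \sum_k (f i - f k) ^+ 2 = p%:R * f i ^+ 2 - 2 * (f i * S) + Q.
  under eq_bigr do rewrite sqrrB.
  by rewrite !big_split /= sumrN sumr_const card_ord sumrMnl -big_distrr /= !mulr_natl.
have : 0 <= \sum_i \sum_k (f i - f k) ^+ 2.
  by do 2!apply: sumr_ge0 => ? _; exact: sqr_ge0.
under eq_bigr do rewrite row.
rewrite !big_split /= sumrN -!big_distrr -big_distrl sumr_const card_ord /= -/S.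
rewrite -/Q -[Q *+ p]mulr_natl -expr2; lra.
Qed.

Lemma sum_norm_le_of_sum_sqr p (f : 'I_p -> R) (k y : R) :
  0 < k -> 0 <= y -> k * \sum_i f i ^+ 2 <= y * \sum_i `|f i| ->
  k * \sum_i `|f i| <= p%:R * y.
Proof.
move=> k_gt0 y_ge0.
have := @sqr_sum_le p (fun i => `|f i|).
rewrite (eq_bigr _ (fun i _ => real_normK (num_real (f i)))).
have T_ge0 : 0 <= \sum_i `|f i| by apply: sumr_ge0 => i _.
have p_ge0 : 0 <= p%:R :> R by [].
move: T_ge0; set T := \sum_i _; set Q := \sum_i _ => T_ge0 hCS hQ.
have [->|T_neq0] := eqVneq T 0; first by rewrite mulr0 mulr_ge0.
have T_gt0 : 0 < T by rewrite lt_def T_neq0.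
rewrite -(ler_pM2l T_gt0).
apply: le_trans (_ : k * (p%:R * Q) <= _).
  by rewrite mulrCA -expr2 ler_wpM2l // ltW.
by rewrite mulrCA [T * _]mulrC -mulrA ler_wpM2l.
Qed.

Lemma sum_offdiag_sqrD p (u : 'I_p -> R) :
  \sum_i \sum_(k | k != i) (u i + u k) ^+ 2 =
  2 * ((p%:R - 2) * \sum_i u i ^+ 2 + (\sum_i u i) ^+ 2).
Proof.
set S := \sum_i u i; set Q := \sum_i u i ^+ 2.
have row i : \sum_(k | k != i) (u i + u k) ^+ 2 =
    (p%:R - 4) * u i ^+ 2 + 2 * (u i * S) + Q.
  apply: (addrI ((u i + u i) ^+ 2)).
  rewrite [LHS](_ : _ = \sum_k (u i + u k) ^+ 2); last by rewrite [RHS](bigD1 i).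
  under eq_bigr do rewrite sqrrD.
  rewrite !big_split /= sumr_const card_ord -big_distrr /= -/S -/Q.
  rewrite -[u i ^+ 2 *+ p]mulr_natl; ring.
under eq_bigr do rewrite row.
rewrite !big_split /= -!big_distrr -big_distrl sumr_const card_ord /= -/S -/Q.
rewrite -[Q *+ p]mulr_natl; ring.
Qed.
End SumInequalities.

Section DiagonallyDominant.
Variables (R : realFieldType) (p : nat) (M : 'M[R]_p) (a : R).
Hypothesis M_sym : M^T = M.
Hypothesis a_gt0 : 0 < a.
Hypothesis M_offdiag_ge : forall i k, i != k -> a <= M i k.
Hypothesis M_dominant : forall i, \sum_(k | k != i) M i k <= M i i.

Let M_symE i k : M i k = M k i.
Proof. by rewrite -[M in LHS]M_sym mxE. Qed.

Lemma dominant_qform_ge (u : 'I_p -> R) :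
  a * (p%:R - 2) * \sum_i u i ^+ 2 <= \sum_i u i * \sum_k M i k * u k.
Proof.
pose G i k := M i k * (u i ^+ 2 + u i * u k).
have row_le i : \sum_(k | k != i) G i k <= u i * \sum_k M i k * u k.
  have -> : u i * \sum_k M i k * u k =
            M i i * u i ^+ 2 + \sum_(k | k != i) M i k * (u i * u k).
    rewrite (bigD1 i) //= mulrDr big_distrr /=.
    by congr (_ + _); [ring | apply: eq_bigr => k _; ring].
  rewrite /G; under eq_bigr do rewrite mulrDr.
  by rewrite big_split /= -big_distrl /= lerD2r ler_wpM2r ?sqr_ge0.
have symmetrize : \sum_i \sum_(k | k != i) M i k * (u i + u k) ^+ 2 =
                  2 * \sum_i \sum_(k | k != i) G i k.
  have swap : \sum_i \sum_(k | k != i) M i k * (u k ^+ 2 + u i * u k) =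
              \sum_i \sum_(k | k != i) G i k.
    rewrite (exchange_big_dep predT) //=; apply: eq_bigr => i _.
    by apply: eq_big => [k|k _]; rewrite 1?eq_sym // /G M_symE [u k * _]mulrC.
  rewrite mulr2n mulrDl mul1r -{1}swap -big_split /=.
  apply: eq_bigr => i _; rewrite -big_split /=.
  by apply: eq_bigr => k _; rewrite /G; ring.
have weight_ge : a * \sum_i \sum_(k | k != i) (u i + u k) ^+ 2 <=
                 \sum_i \sum_(k | k != i) M i k * (u i + u k) ^+ 2.
  rewrite big_distrr; apply: ler_sum => i _; rewrite big_distrr.
  apply: ler_sum => k ki; rewrite ler_wpM2r ?sqr_ge0 ?M_offdiag_ge //.
  by rewrite eq_sym.
move: weight_ge; rewrite sum_offdiag_sqrD symmetrize.
have : \sum_i \sum_(k | k != i) G i k <= \sum_i u i * \sum_k M i k * u k.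
  by apply: ler_sum => i _; exact: row_le.
have := sqr_ge0 (\sum_i u i); have := ltW a_gt0; nra.
Qed.

Lemma dominant_unitmx : (2 < p)%N -> M \in unitmx.
Proof.
move=> p_gt2; rewrite unitmxE unitfE; apply/negP => /det0P [v /negP v_neq0 vM0].
apply: v_neq0; apply/eqP/rowP => i; rewrite mxE.
have Mv0 j : \sum_k M j k * v 0 k = 0.
  transitivity ((v *m M) 0 j); last by rewrite vM0 mxE.
  by rewrite mxE; apply: eq_bigr => k _; rewrite M_symE mulrC.
have := dominant_qform_ge (fun k => v 0 k).
rewrite [X in _ <= X]big1 => [|j _]; last by rewrite Mv0 mulr0.
have coef_gt0 : 0 < a * (p%:R - 2) by rewrite mulr_gt0 // subr_gt0 ltr_nat.
rewrite pmulr_rle0 // => Q_le0.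
have Q0 : \sum_k v 0 k ^+ 2 = 0.
  by apply/eqP; rewrite eq_le Q_le0 sumr_ge0 // => k _; exact: sqr_ge0.
apply/eqP; rewrite -sqrf_eq0; apply/eqP.
exact: (psumr_eq0P (fun k _ => sqr_ge0 (v 0 k)) Q0).
Qed.

Section Solutions.
Variables (C d : R).
Hypothesis a_le_C : a <= C.
Hypothesis M_offdiag_le : forall i k, i != k -> M i k <= C.
Hypothesis M_diag_ge : forall i, d * a <= M i i.
Hypothesis p_ge4 : (4 <= p)%N.

Lemma solution_sum_norm_le (y w : 'I_p -> R) :
  (forall i, `|w i| <= C) -> (forall i, \sum_k M i k * y k = w i) ->
  a * \sum_i `|y i| <= 2 * C.
Proof.
move=> w_le My.
have qform_le : \sum_i y i * \sum_k M i k * y k <= C * \sum_i `|y i|.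
  rewrite big_distrr /=; apply: ler_sum => i _; rewrite My.
  by rewrite (le_trans (ler_norm _)) // normrM mulrC ler_wpM2r.
have p4 : 4%:R <= p%:R :> R by rewrite ler_nat.
have k_gt0 : 0 < a * (p%:R - 2).
  by rewrite mulr_gt0 // subr_gt0 (lt_le_trans _ p4) ?ltr_nat.
have := sum_norm_le_of_sum_sqr k_gt0 (le_trans (ltW a_gt0) a_le_C)
  (le_trans (dominant_qform_ge y) qform_le).
have p2_gt0 : 0 < p%:R - 2 :> R by lra.
move=> h; rewrite -(ler_pM2r p2_gt0) (le_trans (_ : _ <= p%:R * C)) //.
  by rewrite mulrAC.
rewrite -subr_ge0 (_ : _ - _ = C * (p%:R - 4)); last by ring.
by rewrite mulr_ge0 ?subr_ge0 // (le_trans (ltW a_gt0)).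
Qed.

Lemma solution_norm_le (y w : 'I_p -> R) :
  (forall i, `|w i| <= C) -> (forall i, \sum_k M i k * y k = w i) ->
  forall i, d * a ^+ 2 * `|y i| <= 3 * C ^+ 2.
Proof.
move=> w_le My i.
have C_ge0 : 0 <= C := le_trans (ltW a_gt0) a_le_C.
have M_ge0 k : k != i -> 0 <= M i k.
  by move=> ki; rewrite (le_trans (ltW a_gt0)) // M_offdiag_ge // eq_sym.
have offdiag_le : `|\sum_(k | k != i) M i k * y k| <= C * \sum_k `|y k|.
  rewrite (le_trans (ler_norm_sum _ _ _)) // big_distrr /=.
  rewrite [X in _ <= X](bigD1 i) //= ler_wpDl ?mulr_ge0 //.
  apply: ler_sum => k ki; rewrite normrM ler_wpM2r // ger0_norm ?M_ge0 //.
  by rewrite M_offdiag_le // eq_sym.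
have diag_le : M i i * `|y i| <= C + C * \sum_k `|y k|.
  have -> : M i i * `|y i| = `|w i - \sum_(k | k != i) M i k * y k|.
    rewrite -My (bigD1 i) //= addrK normrM ger0_norm //.
    by apply: le_trans (M_dominant i); apply: sumr_ge0.
  exact: le_trans (ler_normB _ _) (lerD (w_le i) offdiag_le).
have := ler_wpM2l (ltW a_gt0)
  (le_trans (ler_wpM2r (normr_ge0 _) (M_diag_ge i)) diag_le).
have := ler_wpM2l C_ge0 (solution_sum_norm_le w_le My).
have := ler_wpM2l C_ge0 a_le_C.
lra.
Qed.

Lemma invmx_mul_norm_le q (W : 'M[R]_(p, q)) :
  (forall i l, `|W i l| <= C) ->
  forall i l, d * a ^+ 2 * `|(invmx M *m W) i l| <= 3 * C ^+ 2.
Proof.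
move=> W_le i l.
apply: (solution_norm_le (y := fun k => (invmx M *m W) k l) (w := fun k => W k l)).
  by move=> k; exact: W_le.
move=> j.
have M_unit : M \in unitmx by apply: dominant_unitmx; apply: leq_trans p_ge4.
by rewrite -[in RHS](mulKVmx M_unit W) mxE.
Qed.

End Solutions.

End DiagonallyDominant.

Section BlockInverse.
Variables (R : comUnitRingType) (r m : nat) (M : 'M[R]_(r + m)).
Hypotheses (M_unit : M \in unitmx) (A_unit : drsubmx M \in unitmx).
Local Notation X := (invmx M).
Local Notation A := (drsubmx M).

Let mulmxV_right_col :
  ulsubmx M *m ursubmx X + ursubmx M *m drsubmx X = 0 /\
  dlsubmx M *m ursubmx X + A *m drsubmx X = 1%:M.
Proof.
have := mulmxV M_unit.
rewrite -{1}[M]submxK -{1}[X]submxK mulmx_block scalar_mx_block.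
by case/eq_block_mx.
Qed.

Lemma mul_col_invmx_drsub :
  M *m col_mx (ursubmx X) (drsubmx X - invmx A) =
  col_mx (- (ursubmx M *m invmx A)) 0.
Proof.
have [top bottom] := mulmxV_right_col.
rewrite -{1}[M]submxK mul_block_col !mulmxBr !addrA top bottom.
by rewrite mulmxV // add0r subrr.
Qed.

Lemma drsubmx_invmx_sub :
  drsubmx X - invmx A = - (invmx A *m dlsubmx M *m ursubmx X).
Proof.
have [_ bottom] := mulmxV_right_col.
have -> : drsubmx X = invmx A *m (1%:M - dlsubmx M *m ursubmx X).
  by rewrite -bottom [_ + A *m _]addrC addrK mulKmx.
by rewrite mulmxBr mulmx1 mulmxA addrAC subrr add0r.
Qed.
End BlockInverse.

Lemma drsubmxE (T : Type) r m (M : 'M[T]_(r + m)) i k :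
  drsubmx M i k = M (rshift r i) (rshift r k).
Proof. by rewrite !mxE. Qed.

Lemma dlsubmxE (T : Type) r m (M : 'M[T]_(r + m)) i l :
  dlsubmx M i l = M (rshift r i) (lshift m l).
Proof. by rewrite !mxE. Qed.

Lemma drsubmx_dominant (R : realFieldType) r m (M : 'M[R]_(r + m)) :
  (forall i k, i != k -> 0 <= M i k) ->
  (forall i, \sum_(k | k != i) M i k <= M i i) ->
  forall i, \sum_(k | k != i) drsubmx M i k <= drsubmx M i i.
Proof.
move=> M_ge0 M_dom i; rewrite drsubmxE; apply: le_trans (M_dom (rshift r i)).
have -> : \sum_(k | k != i) drsubmx M i k =
          \sum_(k | rshift r k != rshift r i) M (rshift r i) (rshift r k).
  by apply: eq_big => [k | k _]; rewrite ?eq_rshift // drsubmxE.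
rewrite big_split_ord /= lerDr.
by apply: sumr_ge0 => l _; rewrite M_ge0 // eq_rlshift.
Qed.

Lemma sqrD1_div_ge4 (R : realFieldType) (e : R) : 0 < e -> 4 <= (1 + e) ^+ 2 / e.
Proof. by move=> e_gt0; rewrite ler_pdivlMr //; have := sqr_ge0 (1 - e); nra. Qed.

Lemma bm_rate_le (R : realFieldType) (r b c x : R) :
  0 <= r -> 0 < c -> c <= b -> 4 <= x ->
  3 * b ^+ 2 / (c ^+ 2 * (x - 1)) *
    (r * (3 * b ^+ 2 / (c ^+ 2 * (x - 1))) / (b^-1 * (x - 2)))
  <= 72 * r * (b ^+ 6 / (x ^+ 3 * c ^+ 5)).
Proof.
move=> r_ge0 c_gt0 c_le_b x_ge4; set y := 3 * b ^+ 2 / _.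
have b_gt0 : 0 < b := lt_le_trans c_gt0 c_le_b.
have x_gt0 : 0 < x by lra.
have x1_gt0 : 0 < x - 1 by lra.
have x2_gt0 : 0 < x - 2 by lra.
have cube_le : x ^+ 3 <= 8 * ((x - 1) ^+ 2 * (x - 2)).
  rewrite -subr_ge0.
  have -> : 8 * ((x - 1) ^+ 2 * (x - 2)) - x ^+ 3 =
            (x - 4) ^+ 3 * 7 + (x - 4) ^+ 2 * 52 + (x - 4) * 120 + 80 by ring.
  have t_ge0 : 0 <= x - 4 by rewrite subr_ge0.
  by rewrite !addr_ge0 ?mulr_ge0 ?exprn_ge0.
have K_ge0 : 0 <= 9 * r * b ^+ 5 / c ^+ 5.
  by rewrite divr_ge0 ?mulr_ge0 ?(ltW b_gt0) ?(ltW c_gt0).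
rewrite (_ : y * _ = 9 * r * b ^+ 5 / c ^+ 5 * (c / ((x - 1) ^+ 2 * (x - 2))));
  last by rewrite /y; field; rewrite !gt_eqF.
rewrite (_ : 72 * r * _ = 9 * r * b ^+ 5 / c ^+ 5 * (8 * b / x ^+ 3));
  last by field; rewrite !gt_eqF.
rewrite ler_wpM2l // ler_pdivrMr ?mulr_gt0 ?exprn_gt0 //.
rewrite mulrAC ler_pdivlMr ?exprn_gt0 //.
by rewrite [8 * b]mulrC -mulrA ler_pM ?exprn_ge0 ?(ltW c_gt0) ?(ltW x_gt0).
Qed.

Section BetaModel.
Variables (R : realType) (r m : nat) (beta : 'I_(r + m) -> R).
Hypothesis m_ge4 : (4 <= m)%N.

Local Notation ratio := (bm_ratio beta).
Local Notation b := (bm_b beta).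
Local Notation c := (bm_c beta).
Local Notation V := (bm_V beta).
Local Notation A := (drsubmx V).
Local Notation N := ((r + m)%:R : R).

Lemma bm_ratio_ge4 i j : 4 <= ratio i j.
Proof. exact/sqrD1_div_ge4/expR_gt0. Qed.

Lemma bm_ratio_le_b i j : i != j -> ratio i j <= b.
Proof.
move=> ij; pose F i := \big[Num.max/0]_(j | j != i) ratio i j.
apply: le_trans (le_bigmax _ F i).
by apply: le_bigmax_cond; rewrite eq_sym.
Qed.

Lemma bm_c_le_ratio i j : i != j -> c <= ratio i j.
Proof.
move=> ij; pose F i := \big[Num.min/b]_(j | j != i) ratio i j.
apply: le_trans (bigmin_le_cond _ F isT) _.
by apply: bigmin_le_cond; rewrite eq_sym.
Qed.

Let m_gt1 : (1 < m)%N. Proof. exact: leq_trans m_ge4. Qed.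
Let j0 : 'I_(r + m) := rshift r (Ordinal (ltnW m_gt1)).
Let j1 : 'I_(r + m) := rshift r (Ordinal m_gt1).
Let j0_neq_j1 : j0 != j1. Proof. by rewrite eq_rshift. Qed.

Lemma bm_b_ge4 : 4 <= b.
Proof. exact: le_trans (bm_ratio_ge4 j0 j1) (bm_ratio_le_b j0_neq_j1). Qed.

Lemma bm_c_le_b : c <= b.
Proof. exact: le_trans (bm_c_le_ratio j0_neq_j1) (bm_ratio_le_b j0_neq_j1). Qed.

Let b_gt0 : 0 < b. Proof. exact: lt_le_trans bm_b_ge4. Qed.

Lemma bm_c_gt0 : 0 < c.
Proof.
apply: lt_bigmin => // i _; apply: lt_bigmin => // k _.
exact: lt_le_trans (bm_ratio_ge4 i k).
Qed.

Let c_gt0 : 0 < c := bm_c_gt0.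
Let binv_gt0 : 0 < b^-1. Proof. by rewrite invr_gt0. Qed.
Let binv_le_cinv : b^-1 <= c^-1.
Proof. by rewrite lef_pV2 ?posrE // bm_c_le_b. Qed.

Lemma bm_V_offdiag i k : i != k -> V i k = (ratio i k)^-1.
Proof. by move=> /negbTE ik; rewrite mxE ik /bm_v /bm_ratio invf_div. Qed.

Lemma bm_V_sym : V^T = V.
Proof.
apply/matrixP => i k; rewrite !mxE eq_sym.
by case: eqVneq => [->|_] //; rewrite /bm_v addrC.
Qed.

Lemma bm_V_offdiag_ge i k : i != k -> b^-1 <= V i k.
Proof.
move=> ik; rewrite bm_V_offdiag // lef_pV2 ?posrE ?bm_ratio_le_b //.
exact: lt_le_trans (bm_ratio_ge4 i k).
Qed.

Lemma bm_V_offdiag_le i k : i != k -> V i k <= c^-1.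
Proof.
move=> ik; rewrite bm_V_offdiag // lef_pV2 ?posrE ?bm_c_le_ratio //.
exact: lt_le_trans (bm_ratio_ge4 i k).
Qed.

Lemma bm_V_diag i : V i i = \sum_(k | k != i) V i k.
Proof.
rewrite [LHS]mxE eqxx; apply: eq_bigr => k ki.
by rewrite mxE eq_sym (negbTE ki).
Qed.

Lemma bm_V_dominant i : \sum_(k | k != i) V i k <= V i i.
Proof. by rewrite bm_V_diag. Qed.

Lemma bm_V_diag_ge i : (N - 1) * b^-1 <= V i i.
Proof.
have sum_const : \sum_(k | k != i) b^-1 = (N - 1) * b^-1.
  apply: (addrI b^-1).
  rewrite [LHS](_ : _ = \sum_(k < r + m) b^-1); last by rewrite [RHS](bigD1 i).
  by rewrite sumr_const card_ord -mulr_natl; ring.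
rewrite bm_V_diag -sum_const; apply: ler_sum => k ki.
by rewrite bm_V_offdiag_ge // eq_sym.
Qed.

Lemma bm_A_sym : A^T = A.
Proof. by rewrite trmx_drsub bm_V_sym. Qed.

Lemma bm_A_offdiag_ge i k : i != k -> b^-1 <= A i k.
Proof. by move=> ik; rewrite drsubmxE; apply: bm_V_offdiag_ge; rewrite eq_rshift. Qed.

Lemma bm_A_offdiag_le i k : i != k -> A i k <= c^-1.
Proof. by move=> ik; rewrite drsubmxE; apply: bm_V_offdiag_le; rewrite eq_rshift. Qed.

Lemma bm_A_dominant i : \sum_(k | k != i) A i k <= A i i.
Proof.
apply: drsubmx_dominant bm_V_dominant i => j k jk.
exact: le_trans (ltW binv_gt0) (bm_V_offdiag_ge jk).
Qed.

Lemma bm_A_diag_ge i : (N - 1) * b^-1 <= A i i.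
Proof. by rewrite drsubmxE bm_V_diag_ge. Qed.

Let N1_gt0 : 0 < N - 1. Proof. by rewrite subr_gt0 ltr1n ltn_addl. Qed.

Lemma bm_invmx_drsub_mul_dlsub_le i l :
  `|(invmx A *m dlsubmx V) i l| <= 3 * b ^+ 2 / (c ^+ 2 * (N - 1)).
Proof.
have W_le j k : `|dlsubmx V j k| <= c^-1.
  have jk : rshift r j != lshift m k by rewrite eq_rlshift.
  rewrite dlsubmxE ger0_norm ?bm_V_offdiag_le //.
  exact: le_trans (ltW binv_gt0) (bm_V_offdiag_ge jk).
have := invmx_mul_norm_le bm_A_sym binv_gt0 bm_A_offdiag_ge bm_A_dominant
  binv_le_cinv bm_A_offdiag_le bm_A_diag_ge m_ge4 W_le i l.
set t := `|_| => h.
have k_gt0 : 0 < b ^+ 2 / (N - 1) by rewrite divr_gt0 ?exprn_gt0.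
rewrite (_ : t = (N - 1) * b^-1 ^+ 2 * t * (b ^+ 2 / (N - 1))); last first.
  by field; rewrite -natrD !gt_eqF.
rewrite (_ : 3 * b ^+ 2 / _ = 3 * c^-1 ^+ 2 * (b ^+ 2 / (N - 1))); last first.
  by field; rewrite -natrD !gt_eqF.
by rewrite ler_pM2r.
Qed.

Let n_gt2 : (2 < r + m)%N. Proof. exact: leq_trans (ltnW m_ge4) (leq_addl r m). Qed.

Let V_unit : V \in unitmx.
Proof.
exact: dominant_unitmx bm_V_sym binv_gt0 bm_V_offdiag_ge bm_V_dominant n_gt2.
Qed.

Let A_unit : A \in unitmx.
Proof.
exact: dominant_unitmx bm_A_sym binv_gt0 bm_A_offdiag_ge bm_A_dominant (ltnW m_ge4).
Qed.

Lemma bm_ursub_invmx_sum_le j :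
  b^-1 * (N - 2) * \sum_l `|ursubmx (invmx V) l j|
    <= r%:R * (3 * b ^+ 2 / (c ^+ 2 * (N - 1))).
Proof.
set y0 := 3 * b ^+ 2 / _; set E := ursubmx (invmx V).
pose u k := col_mx E (drsubmx (invmx V) - invmx A) k j.
have Vu k : \sum_k' V k k' * u k' = col_mx (- (ursubmx V *m invmx A)) 0 k j.
  by rewrite -(mul_col_invmx_drsub V_unit A_unit) mxE.
have ursub_invmx l : (ursubmx V *m invmx A) l j = (invmx A *m dlsubmx V) j l.
  suff -> : invmx A *m dlsubmx V = (ursubmx V *m invmx A)^T by rewrite [RHS]mxE.
  by rewrite trmx_mul trmx_inv bm_A_sym trmx_ursub bm_V_sym.
have qform_le : \sum_k u k * \sum_k' V k k' * u k' <= y0 * \sum_l `|E l j|.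
  under eq_bigr do rewrite Vu.
  rewrite big_split_ord /= [X in _ + X]big1 ?addr0 => [|k _]; last first.
    by rewrite col_mxEd mxE mulr0.
  rewrite big_distrr /=; apply: ler_sum => l _.
  rewrite /u !col_mxEu [(- (_ : 'M[R]_(r, m))) l j]mxE ursub_invmx mulrN.
  rewrite (le_trans (ler_norm _)) //.
  by rewrite normrN normrM mulrC ler_wpM2r // bm_invmx_drsub_mul_dlsub_le.
have sqr_le : \sum_l E l j ^+ 2 <= \sum_k u k ^+ 2.
  rewrite big_split_ord /=.
  have -> : \sum_l u (lshift m l) ^+ 2 = \sum_l E l j ^+ 2.
    by apply: eq_bigr => l _; rewrite /u col_mxEu.
  by rewrite lerDl sumr_ge0 // => k _; exact: sqr_ge0.
have k_gt0 : 0 < b^-1 * (N - 2).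
  by rewrite mulr_gt0 // subr_gt0 ltr_nat.
apply: (sum_norm_le_of_sum_sqr k_gt0).
  by apply: divr_ge0; rewrite mulr_ge0 ?sqr_ge0 ?(ltW N1_gt0).
apply: le_trans (ler_wpM2l (ltW k_gt0) sqr_le) _.
apply: le_trans qform_le.
exact: dominant_qform_ge bm_V_sym binv_gt0 bm_V_offdiag_ge bm_V_dominant u.
Qed.

Lemma bm_W22_entry_le i j :
  `|(drsubmx (bm_W beta) - (invmx A - drsubmx (bm_S beta))) i j|
    <= (72 * r)%:R * (b ^+ 6 / (N ^+ 3 * c ^+ 5)).
Proof.
set y0 := 3 * b ^+ 2 / (c ^+ 2 * (N - 1)).
have y0_ge0 : 0 <= y0 by apply: divr_ge0; rewrite mulr_ge0 ?sqr_ge0 ?(ltW N1_gt0).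
have k_gt0 : 0 < b^-1 * (N - 2) by rewrite mulr_gt0 // subr_gt0 ltr_nat.
have -> : (drsubmx (bm_W beta) - (invmx A - drsubmx (bm_S beta))) i j =
          (drsubmx (invmx V) - invmx A) i j.
  by rewrite /bm_W !mxE; ring.
rewrite drsubmx_invmx_sub // [(- (_ : 'M[R]_(m, m))) i j]mxE normrN mxE.
apply: le_trans (ler_norm_sum _ _ _) _.
apply: le_trans (_ : \sum_l y0 * `|ursubmx (invmx V) l j| <= _).
  by apply: ler_sum => l _; rewrite normrM ler_wpM2r // bm_invmx_drsub_mul_dlsub_le.
rewrite -big_distrr /=.
apply: le_trans (_ : y0 * (r%:R * y0 / (b^-1 * (N - 2))) <= _).
  by rewrite ler_wpM2l // ler_pdivlMr // mulrC bm_ursub_invmx_sum_le.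
rewrite natrM; apply: bm_rate_le; rewrite ?bm_c_le_b //.
by rewrite ler_nat (leq_trans m_ge4 (leq_addl r m)).
Qed.

End BetaModel.

Lemma maxnorm_le (R : realType) p q (J : 'M[R]_(p, q)) (B : R) :
  0 <= B -> (forall i j, `|J i j| <= B) -> maxnorm J <= B.
Proof. by move=> B_ge0 J_le; apply: bigmax_le => // i _; apply: bigmax_le. Qed.

Theorem lemma10 (r : nat) (hr : (0 < r)%N) :
  exists C : nat, exists N : nat,
    forall (R : realType) (m : nat), (N <= r + m)%N ->
    forall beta : 'I_(r + m) -> R,
      maxnorm (drsubmx (bm_W beta)
               - (invmx (drsubmx (bm_V beta)) - drsubmx (bm_S beta)))
      <= C%:R * (bm_b beta ^+ 6 / ((r + m)%:R ^+ 3 * bm_c beta ^+ 5)).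
Proof.
exists (72 * r)%N, (r + 4)%N => R m n_ge beta.
have m_ge4 : (4 <= m)%N by rewrite -(leq_add2l r).
have c_gt0 := bm_c_gt0 beta m_ge4.
have b_gt0 := lt_le_trans c_gt0 (bm_c_le_b beta m_ge4).
apply: maxnorm_le; last exact: bm_W22_entry_le.
by rewrite mulr_ge0 // divr_ge0 ?mulr_ge0 ?(ltW b_gt0) ?(ltW c_gt0).
Qed.
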